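(* Let $\gamma:\mathbb{R}\to\mathbb{R}^3$ be a $C^\infty$ $l$-periodic curve parametrized by arc length, $\xi$ a $C^\infty$ $l$-odd-periodic unit vector field along $\gamma$ with $\gamma'(s),\xi(s)$ linearly independent for all $s$ and $\det(\gamma',\xi,\xi')\equiv 0$, and let $F(s,u)=\gamma(s)+u\xi(s)$, $(s,u)\in\mathbb{R}^2$, regarded on $M=\mathbb{R}^2/\!\sim$. Let $\nu(s)=\gamma'(s)\times\xi(s)/|\gamma'(s)\times\xi(s)|$. Then: (i) every singular point of $F$ is non-degenerate, i.e. $d\lambda\neq 0$ there, where $\lambda=\det(F_s,F_u,\nu)$; (ii) the singular set of $F$ is $$S(F)=\left\{(s,u)\in M : u=-\frac{|\gamma'(s)\times\xi(s)|^2}{\gamma'(s)\cdot\xi'(s)},\ \xi'(s)\neq 0\right\};$$ (iii) along the singular set, a null vector field of $F$ (a nonzero vector field $\eta$ with $dF(\eta)=0$) is given by $\dfrac{\partial}{\partial s}-(\gamma'\cdot\xi)\dfrac{\partial}{\partial u}$.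
   Context: $l$-periodic means $\gamma(s+l)=\gamma(s)$; $l$-odd-periodic means $\xi(s+l)=-\xi(s)$; $\sim$ identifies $(s,u)$ with $(s+l,-u)$. A singular point is a point where the Jacobian of $F$ has rank $<2$. The condition $\det(\gamma',\xi,\xi')\equiv 0$ means $F$ is developable (flat). *)

From Stdlib Require Import Reals.
From Coquelicot Require Import Coquelicot.
Open Scope R_scope.

Definition vec := (R * R * R)%type.
Definition c1 (x : vec) : R := fst (fst x).
Definition c2 (x : vec) : R := snd (fst x).
Definition c3 (x : vec) : R := snd x.
Definition mkvec (a b c : R) : vec := (a, b, c).
Definition vec0 : vec := mkvec 0 0 0.
Definition vadd (x y : vec) : vec := mkvec (c1 x + c1 y) (c2 x + c2 y) (c3 x + c3 y).
Definition vscale (k : R) (x : vec) : vec := mkvec (k * c1 x) (k * c2 x) (k * c3 x).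
Definition dot (x y : vec) : R := c1 x * c1 y + c2 x * c2 y + c3 x * c3 y.
Definition cross (x y : vec) : vec :=
  mkvec (c2 x * c3 y - c3 x * c2 y) (c3 x * c1 y - c1 x * c3 y) (c1 x * c2 y - c2 x * c1 y).
Definition vnorm (x : vec) : R := sqrt (dot x x).
Definition det3 (a b c : vec) : R := dot (cross a b) c.

Definition vderive (f : R -> vec) (s : R) : vec :=
  mkvec (Derive (fun t => c1 (f t)) s) (Derive (fun t => c2 (f t)) s)
        (Derive (fun t => c3 (f t)) s).

Definition smooth_fun (f : R -> R) : Prop := forall (n : nat) (x : R), ex_derive (Derive_n f n) x.
Definition smooth_curve (f : R -> vec) : Prop :=
  smooth_fun (fun t => c1 (f t)) /\ smooth_fun (fun t => c2 (f t)) /\ smooth_fun (fun t => c3 (f t)).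

Definition lin_indep2 (a b : vec) : Prop :=
  forall x y : R, vadd (vscale x a) (vscale y b) = vec0 -> x = 0 /\ y = 0.

Definition Fsurf (gamma xi : R -> vec) (s u : R) : vec := vadd (gamma s) (vscale u (xi s)).
Definition F_s (gamma xi : R -> vec) (s u : R) : vec := vderive (fun t => Fsurf gamma xi t u) s.
Definition F_u (gamma xi : R -> vec) (s u : R) : vec := vderive (fun v => Fsurf gamma xi s v) u.

Definition singular_point (gamma xi : R -> vec) (s u : R) : Prop :=
  ~ lin_indep2 (F_s gamma xi s u) (F_u gamma xi s u).

Definition nu (gamma xi : R -> vec) (s : R) : vec :=
  vscale (/ vnorm (cross (vderive gamma s) (xi s))) (cross (vderive gamma s) (xi s)).
Definition lambda (gamma xi : R -> vec) (s u : R) : R :=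
  det3 (F_s gamma xi s u) (F_u gamma xi s u) (nu gamma xi s).

From Pilot Require Import Defs.
From Stdlib Require Import Reals Lra Classical.
From Coquelicot Require Import Coquelicot.
Open Scope R_scope.

(* At a point s write g = γ'(s), x = ξ(s), d = ξ'(s), W = |g × x|^2 and
   p = g·d.  Since det(g, x, d) = 0 the vector d lies in the plane of g and x,
   and since x·d = 0 it is a multiple of g − (g·x) x; comparing dot products
   with g gives  d = (p / W) (g − (g·x) x).  Hence
   F_s = g + u d = (1 + u p / W) g − (u p (g·x) / W) x,  so F_s is parallel
   to F_u = x exactly when W + u p = 0, which also forces p ≠ 0 and yields the
   null vector ∂s − (g·x) ∂u.  Finally λ is affine in u with slope
   det(d, x, ν) = (d × x)·(g × x) / |g × x| = p / |g × x| by Lagrange's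
   identity, and this slope does not vanish on the singular set. *)

Ltac vec_unfold :=
  unfold det3, cross, dot, vadd, vscale, vec0, mkvec, Defs.c1, Defs.c2, Defs.c3; cbn.

Lemma vec_ext (a b : vec) :
  Defs.c1 a = Defs.c1 b -> Defs.c2 a = Defs.c2 b -> Defs.c3 a = Defs.c3 b -> a = b.
Proof. destruct a as [[a1 a2] a3], b as [[b1 b2] b3]; cbn; intros -> -> ->; reflexivity. Qed.

Ltac vec_ring := apply vec_ext; vec_unfold; ring.

Ltac vec_lin :=
  apply vec_ext; unfold vadd, vscale, vec0, mkvec, Defs.c1, Defs.c2, Defs.c3; cbn [fst snd].

Lemma dot_self_ge0 (a : vec) : 0 <= dot a a.
Proof. vec_unfold; nra. Qed.

Lemma dot_self_eq0 (a : vec) : dot a a = 0 -> a = vec0.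
Proof.
  intro H; apply vec_ext; revert H; vec_unfold; intro H; nra.
Qed.

Lemma vnorm_unit_dot (a : vec) : vnorm a = 1 -> dot a a = 1.
Proof.
  unfold vnorm; intro H.
  rewrite <- (sqrt_sqrt (dot a a)) by apply dot_self_ge0.
  rewrite H; ring.
Qed.

Lemma vnorm_sqr (a : vec) : vnorm a ^ 2 = dot a a.
Proof. unfold vnorm; rewrite pow2_sqrt; [reflexivity | apply dot_self_ge0]. Qed.

Lemma vnorm_pos (a : vec) : 0 < dot a a -> 0 < vnorm a.
Proof. exact (sqrt_lt_R0 _). Qed.

Lemma dot_comm (a b : vec) : dot a b = dot b a.
Proof. vec_unfold; ring. Qed.

Lemma dot_cross_cross (a b e f : vec) :
  dot (cross a b) (cross e f) = dot a e * dot b f - dot a f * dot b e.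
Proof. vec_unfold; ring. Qed.

Lemma cross_decomp (g x d : vec) :
  vscale (dot (cross g x) (cross g x)) d =
  vadd (vscale (det3 g x d) (cross g x))
       (vadd (vscale (dot x x * dot g d - dot g x * dot x d) g)
             (vscale (dot g g * dot x d - dot g x * dot g d) x)).
Proof. vec_ring. Qed.

Lemma lin_indep2_cross_pos (a b : vec) :
  lin_indep2 a b -> 0 < dot (cross a b) (cross a b).
Proof.
  intro Hab.
  destruct (Rle_lt_or_eq_dec 0 _ (dot_self_ge0 (cross a b))) as [Hpos | Hzero]; [exact Hpos|].
  exfalso.
  set (w := vadd (vscale (- dot a b) a) (vscale (dot a a) b)).
  assert (Hw : dot w w = dot a a * dot (cross a b) (cross a b)) by (unfold w; vec_unfold; ring).
  rewrite <- Hzero, Rmult_0_r in Hw.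
  destruct (Hab _ _ (dot_self_eq0 w Hw)) as [_ Ha].
  apply dot_self_eq0 in Ha; subst a.
  destruct (Hab 1 0) as [Hone _]; [vec_ring | lra].
Qed.

Lemma lin_indep2_comb (a b : vec) (alpha beta : R) :
  lin_indep2 a b ->
  (~ lin_indep2 (vadd (vscale alpha a) (vscale beta b)) b <-> alpha = 0).
Proof.
  intro Hab; split.
  - intro Hdep. apply NNPP; intro Halpha. apply Hdep; intros p q Hpq.
    destruct (Hab (p * alpha) (p * beta + q)) as [H1 H2].
    { rewrite <- Hpq; vec_ring. }
    assert (p = 0) by (destruct (Rmult_integral _ _ H1); [assumption | contradiction]).
    split; [assumption | subst p; lra].
  - intros -> Hindep.
    destruct (Hindep 1 (- beta)) as [Hone _]; [vec_ring | lra].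
Qed.

Record developable_frame (g x d : vec) : Prop := {
  frame_g_unit : dot g g = 1;
  frame_x_unit : dot x x = 1;
  frame_orth : dot x d = 0;
  frame_det : det3 g x d = 0;
  frame_indep : lin_indep2 g x }.

Section DevelopableFrame.

Context {g x d : vec}.
Hypothesis Hf : developable_frame g x d.

Local Notation W := (dot (cross g x) (cross g x)).

Lemma frame_W_pos : 0 < W.
Proof. exact (lin_indep2_cross_pos _ _ (frame_indep _ _ _ Hf)). Qed.

Lemma frame_dir : d = vscale (dot g d / W) (vadd g (vscale (- dot g x) x)).
Proof.
  pose proof frame_W_pos as HW.
  pose proof (cross_decomp g x d) as Hdec.
  rewrite (frame_det _ _ _ Hf), (frame_g_unit _ _ _ Hf), (frame_x_unit _ _ _ Hf),
    (frame_orth _ _ _ Hf) in Hdec.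
  transitivity (vscale (/ W) (vscale W d)); [vec_lin; field; lra|].
  rewrite Hdec; vec_lin; field; lra.
Qed.

Lemma frame_tangent (u : R) :
  vadd g (vscale u d) =
  vadd (vscale (1 + u * dot g d / W) g) (vscale (- (u * dot g d * dot g x) / W) x).
Proof.
  pose proof frame_W_pos as HW.
  rewrite frame_dir at 1; vec_lin; field; lra.
Qed.

Lemma frame_singular_iff (u : R) :
  ~ lin_indep2 (vadd g (vscale u d)) x <-> W + u * dot g d = 0.
Proof.
  pose proof frame_W_pos as HW.
  rewrite frame_tangent, (lin_indep2_comb _ _ _ _ (frame_indep _ _ _ Hf)).
  split; intro H.
  - replace (W + u * dot g d) with (W * (1 + u * dot g d / W)) by (field; lra).
    rewrite H; ring.
  - replace (1 + u * dot g d / W) with ((W + u * dot g d) / W) by (field; lra).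
    rewrite H; unfold Rdiv; ring.
Qed.

Lemma frame_singular_dot_neq0 (u : R) : W + u * dot g d = 0 -> dot g d <> 0.
Proof. pose proof frame_W_pos as HW; intros H Hp; rewrite Hp in H; lra. Qed.

Lemma frame_d_eq0_iff : d = vec0 <-> dot g d = 0.
Proof.
  split.
  - intros ->; vec_unfold; ring.
  - intro Hp; rewrite frame_dir, Hp; vec_lin; unfold Rdiv; ring.
Qed.

Lemma frame_singular_set_iff (u : R) :
  W + u * dot g d = 0 <-> u = - vnorm (cross g x) ^ 2 / dot g d /\ d <> vec0.
Proof.
  rewrite vnorm_sqr, frame_d_eq0_iff; split.
  - intro H; pose proof (frame_singular_dot_neq0 u H) as Hp.
    split; [field_simplify_eq; [lra | exact Hp] | exact Hp].
  - intros [-> Hp]; field; exact Hp.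
Qed.

Lemma frame_null_vector (u : R) :
  W + u * dot g d = 0 ->
  vadd (vscale 1 (vadd g (vscale u d))) (vscale (- dot g x) x) = vec0.
Proof.
  pose proof frame_W_pos as HW; intro H.
  rewrite frame_tangent.
  transitivity (vscale ((W + u * dot g d) / W) (vadd g (vscale (- dot g x) x)));
    [vec_lin; field; lra|].
  rewrite H; vec_lin; unfold Rdiv; ring.
Qed.

Lemma frame_det3_normal :
  det3 d x (vscale (/ vnorm (cross g x)) (cross g x)) = dot g d / vnorm (cross g x).
Proof.
  transitivity (/ vnorm (cross g x) * dot (cross d x) (cross g x)); [vec_unfold; ring|].
  rewrite dot_cross_cross, (dot_comm d g), (dot_comm d x), (frame_orth _ _ _ Hf),
    (frame_x_unit _ _ _ Hf).
  unfold Rdiv; ring.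
Qed.

Lemma frame_det3_normal_neq0 (u : R) :
  W + u * dot g d = 0 -> det3 d x (vscale (/ vnorm (cross g x)) (cross g x)) <> 0.
Proof.
  intro H; rewrite frame_det3_normal; unfold Rdiv.
  apply Rmult_integral_contrapositive_currified; [exact (frame_singular_dot_neq0 u H)|].
  exact (Rinv_neq_0_compat _ (Rgt_not_eq _ _ (vnorm_pos _ frame_W_pos))).
Qed.

End DevelopableFrame.

Lemma smooth_fun_ex_derive (f : R -> R) : smooth_fun f -> forall t, ex_derive f t.
Proof. intro Hf; exact (Hf 0%nat). Qed.

Lemma Derive_add_scale (f h : R -> R) (u s : R) :
  ex_derive f s -> ex_derive h s ->
  Derive (fun t => f t + u * h t) s = Derive f s + u * Derive h s.
Proof.
  intros Hf Hh.
  rewrite Derive_plus, Derive_scal; [reflexivity | exact Hf | exact (ex_derive_scal _ _ _ Hh)].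
Qed.

Lemma vderive_add_scale (f h : R -> vec) (u s : R) :
  smooth_curve f -> smooth_curve h ->
  vderive (fun t => vadd (f t) (vscale u (h t))) s = vadd (vderive f s) (vscale u (vderive h s)).
Proof.
  intros [f1 [f2 f3]] [h1 [h2 h3]].
  unfold vderive; vec_lin; apply Derive_add_scale; apply smooth_fun_ex_derive; assumption.
Qed.

Lemma vderive_affine (a b : vec) (u : R) : vderive (fun v => vadd a (vscale v b)) u = b.
Proof.
  destruct a as [[a1 a2] a3], b as [[b1 b2] b3].
  unfold vderive; vec_lin; apply is_derive_unique; auto_derive; trivial; ring.
Qed.

Lemma Derive_dot_self (f : R -> vec) (s : R) :
  smooth_curve f -> Derive (fun t => dot (f t) (f t)) s = 2 * dot (f s) (vderive f s).
Proof.
  intros [H1 [H2 H3]].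
  set (f1 := fun t => Defs.c1 (f t)); set (f2 := fun t => Defs.c2 (f t));
    set (f3 := fun t => Defs.c3 (f t)).
  apply is_derive_unique.
  change (fun t => dot (f t) (f t)) with (fun t => f1 t * f1 t + f2 t * f2 t + f3 t * f3 t).
  auto_derive.
  - repeat split; apply smooth_fun_ex_derive; assumption.
  - unfold dot, vderive, f1, f2, f3; vec_unfold; ring.
Qed.

Lemma unit_curve_orth (f : R -> vec) (s : R) :
  smooth_curve f -> (forall t, vnorm (f t) = 1) -> dot (f s) (vderive f s) = 0.
Proof.
  intros Hf Hunit.
  assert (Hconst : Derive (fun t => dot (f t) (f t)) s = 0).
  { rewrite (Derive_ext _ (fun _ => 1)) by (intro t; exact (vnorm_unit_dot _ (Hunit t))).
    apply Derive_const. }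
  rewrite Derive_dot_self in Hconst by exact Hf; lra.
Qed.

Lemma F_s_eq (gamma xi : R -> vec) (s u : R) :
  smooth_curve gamma -> smooth_curve xi ->
  F_s gamma xi s u = vadd (vderive gamma s) (vscale u (vderive xi s)).
Proof. exact (vderive_add_scale gamma xi u s). Qed.

Lemma F_u_eq (gamma xi : R -> vec) (s u : R) : F_u gamma xi s u = xi s.
Proof. exact (vderive_affine (gamma s) (xi s) u). Qed.

Lemma det3_add_scale (a b e f : vec) (v : R) :
  det3 (vadd a (vscale v b)) e f = det3 a e f + v * det3 b e f.
Proof. vec_unfold; ring. Qed.

Lemma Derive_lambda_u (gamma xi : R -> vec) (s u : R) :
  smooth_curve gamma -> smooth_curve xi ->
  Derive (fun v => lambda gamma xi s v) u = det3 (vderive xi s) (xi s) (nu gamma xi s).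
Proof.
  intros Hg Hx.
  rewrite (Derive_ext _ (fun v => det3 (vderive gamma s) (xi s) (nu gamma xi s)
                                  + v * det3 (vderive xi s) (xi s) (nu gamma xi s))).
  - apply is_derive_unique; auto_derive; trivial; ring.
  - intro v; unfold lambda; rewrite F_s_eq, F_u_eq by assumption; apply det3_add_scale.
Qed.

Theorem lemma2p6 (gamma xi : R -> vec) (l : R) :
  0 < l ->
  smooth_curve gamma -> smooth_curve xi ->
  (forall s, gamma (s + l) = gamma s) ->
  (forall s, xi (s + l) = vscale (-1) (xi s)) ->
  (forall s, vnorm (vderive gamma s) = 1) ->
  (forall s, vnorm (xi s) = 1) ->
  (forall s, lin_indep2 (vderive gamma s) (xi s)) ->
  (forall s, det3 (vderive gamma s) (xi s) (vderive xi s) = 0) ->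
  (forall s u, singular_point gamma xi s u ->
     (Derive (fun t => lambda gamma xi t u) s, Derive (fun v => lambda gamma xi s v) u)
       <> (0, 0)) /\
  (forall s u, singular_point gamma xi s u <->
     (u = - (vnorm (cross (vderive gamma s) (xi s))) ^ 2
            / dot (vderive gamma s) (vderive xi s)
      /\ vderive xi s <> vec0)) /\
  (forall s u, singular_point gamma xi s u ->
     (1, - dot (vderive gamma s) (xi s)) <> (0, 0) /\
     vadd (vscale 1 (F_s gamma xi s u))
          (vscale (- dot (vderive gamma s) (xi s)) (F_u gamma xi s u)) = vec0).
Proof.
  (* Periodicity only makes F descend to M; the claims are pointwise in (s, u). *)
  intros _ Hg Hx _ _ Hg_unit Hx_unit Hindep Hdet.
  assert (Hf : forall s, developable_frame (vderive gamma s) (xi s) (vderive xi s)).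
  { intro s; split; auto using vnorm_unit_dot.
    exact (unit_curve_orth xi s Hx Hx_unit). }
  assert (Hsing : forall s u, singular_point gamma xi s u <->
    dot (cross (vderive gamma s) (xi s)) (cross (vderive gamma s) (xi s))
      + u * dot (vderive gamma s) (vderive xi s) = 0).
  { intros s u; unfold singular_point; rewrite F_s_eq, F_u_eq by assumption.
    exact (frame_singular_iff (Hf s) u). }
  split; [|split]; intros s u; rewrite Hsing.
  - intros Hsu [= _ Hlam].
    rewrite Derive_lambda_u in Hlam by assumption.
    exact (frame_det3_normal_neq0 (Hf s) u Hsu Hlam).
  - exact (frame_singular_set_iff (Hf s) u).
  - intro Hsu; split; [intros [= Hone]; lra|].
    rewrite F_s_eq, F_u_eq by assumption.
    exact (frame_null_vector (Hf s) u Hsu).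
Qed.
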